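(* The domain and codomain functors $P_{\mathsf{pMet}}\colon\mathsf{pSMT}\to\mathsf{pMet}$, $(X,K,\phi)\mapsto X$, and $P_{\mathsf{sCpx}}\colon\mathsf{pSMT}\to\mathsf{sCpx}$, $(X,K,\phi)\mapsto K$, both have left adjoints and right adjoints. Moreover, the domain functor $P_{\mathsf{Met}}\colon\mathsf{SMT}\to\mathsf{Met}$, $(X,K,\phi)\mapsto X$, has a left adjoint and a right adjoint.
   Context: $\mathsf{Met}$ is the category whose objects are metric spaces and whose morphisms are short (i.e. 1-Lipschitz) maps. $\mathsf{pMet}$ is the category of extended pseudo-metric spaces (distance function with values in $[0,\infty]$, symmetric, satisfying the triangle inequality, $d(x,x)=0$, but distinct points may be at distance $0$) with short maps. $\mathsf{sCpx}$ is the category of abstract simplicial complexes (a vertex set $K^0$ together with a family $K$ of nonempty finite subsets of $K^0$ containing all singletons and closed under passing to nonempty subsets) with simplicial maps (functions on vertex sets sending simplices to simplices). Let $U$ be the forgetful functor from $\mathsf{Met}$ (resp. $\mathsf{pMet}$) to $\mathsf{Set}$ and $(-)^0\colon\mathsf{sCpx}\to\mathsf{Set}$ the vertex-set functor. The category $\mathsf{SMT}$ of simplicial metric thickenings is the restricted comma category $(U\downarrow(-)^0)_{\cong}$ with $U$ defined on $\mathsf{Met}$: its objects are triples $(X,K,\phi)$ with $X$ a metric space, $K$ an abstract simplicial complex and $\phi\colon X\to K^0$ a bijection, and its morphisms $(X,K,\phi)\to(Y,L,\psi)$ are pairs $(f,g)$ with $f\colon X\to Y$ short, $g\colon K\to L$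 simplicial, and $\psi\circ f=g|_{K^0}\circ\phi$. $\mathsf{pSMT}$ is defined identically with $U$ defined on $\mathsf{pMet}$ (so $X$ is an extended pseudo-metric space). *)

From Stdlib Require Import Reals List ProofIrrelevance FunctionalExtensionality PropExtensionality.
From Coquelicot Require Import Rbar.


Record Category := {
  Ob :> Type;
  Hom : Ob -> Ob -> Type;
  idm : forall A, Hom A A;
  comp : forall A B C, Hom B C -> Hom A B -> Hom A C;
  comp_idl : forall A B (f : Hom A B), comp A B B (idm B) f = f;
  comp_idr : forall A B (f : Hom A B), comp A A B f (idm A) = f;
  comp_assoc : forall A B C D (f : Hom A B) (g : Hom B C) (h : Hom C D),
      comp A C D h (comp A B C g f) = comp A B D (comp B C D h g) f }.
Arguments Hom {c} _ _.
Arguments idm {c} _.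
Arguments comp {c A B C} _ _.

Record Functor (C D : Category) := {
  fobj :> Ob C -> Ob D;
  fmap : forall A B, Hom A B -> Hom (fobj A) (fobj B);
  fmap_id : forall A, fmap A A (idm A) = idm (fobj A);
  fmap_comp : forall A B E (f : Hom A B) (g : Hom B E),
      fmap A E (comp g f) = comp (fmap B E g) (fmap A B f) }.
Arguments fmap {C D} f0 {A B} _.

Record Adjunction (C D : Category) (F : Functor C D) (G : Functor D C) := {
  adj_unit : forall c : Ob C, Hom c (G (F c));
  adj_counit : forall d : Ob D, Hom (F (G d)) d;
  adj_unit_nat : forall c c' (f : Hom c c'),
      comp (fmap G (fmap F f)) (adj_unit c) = comp (adj_unit c') f;
  adj_counit_nat : forall d d' (g : Hom d d'),
      comp g (adj_counit d) = comp (adj_counit d') (fmap F (fmap G g));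
  adj_tri1 : forall c, comp (adj_counit (F c)) (fmap F (adj_unit c)) = idm (F c);
  adj_tri2 : forall d, comp (fmap G (adj_counit d)) (adj_unit (G d)) = idm (G d) }.

Arguments Adjunction {C D} F G.

Definition has_left_adjoint (C D : Category) (G : Functor D C) : Prop :=
  exists F : Functor C D, inhabited (Adjunction F G).
Definition has_right_adjoint (C D : Category) (F : Functor C D) : Prop :=
  exists G : Functor D C, inhabited (Adjunction F G).

Record ConcreteCat := {
  cOb : Type;
  carr : cOb -> Type;
  isHom : forall X Y : cOb, (carr X -> carr Y) -> Prop;
  isHom_id : forall X, isHom X X (fun x => x);
  isHom_comp : forall X Y Z (f : carr X -> carr Y) (g : carr Y -> carr Z),
      isHom X Y f -> isHom Y Z g -> isHom X Z (fun x => g (f x)) }.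
Arguments isHom_comp c {X Y Z f g} _ _.
Arguments isHom {c X Y} _.

Section Concrete.
Variable A : ConcreteCat.

Definition CHom (X Y : cOb A) := {f : carr A X -> carr A Y | isHom (c:=A) f}.

Lemma chom_eq {X Y} (f g : CHom X Y) : proj1_sig f = proj1_sig g -> f = g.
Proof. destruct f, g; simpl; intros ->; f_equal; apply proof_irrelevance. Qed.

Definition cid X : CHom X X := exist _ (fun x => x) (isHom_id A X).
Definition ccomp {X Y Z} (g : CHom Y Z) (f : CHom X Y) : CHom X Z :=
  exist _ (fun x => proj1_sig g (proj1_sig f x))
    (isHom_comp A (proj2_sig f) (proj2_sig g)).

Definition CatOf : Category.
Proof.
  refine {| Ob := cOb A; Hom := CHom; idm := cid; comp := @ccomp |};
  intros; apply chom_eq; reflexivity.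
Defined.
End Concrete.
Arguments ccomp {A X Y Z} _ _.
Arguments chom_eq {A X Y} f g _.

Section Comma.
Variables A B : ConcreteCat.

Record CommaOb := {
  cdom : cOb A;
  ccod : cOb B;
  cphi : carr A cdom -> carr B ccod;
  cphi_bij : exists psi : carr B ccod -> carr A cdom,
      (forall x, psi (cphi x) = x) /\ (forall y, cphi (psi y) = y) }.

Record CommaHom (x y : CommaOb) := {
  hf : CHom A (cdom x) (cdom y);
  hg : CHom B (ccod x) (ccod y);
  hcomm : forall v, cphi y (proj1_sig hf v) = proj1_sig hg (cphi x v) }.
Arguments hf {x y} _.
Arguments hg {x y} _.
Arguments hcomm {x y} _ _.

Lemma commahom_eq x y (f g : CommaHom x y) : hf f = hf g -> hg f = hg g -> f = g.
Proof. destruct f, g; simpl; intros -> ->; f_equal; apply proof_irrelevance. Qed.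

Definition comma_id x : CommaHom x x :=
  {| hf := cid A (cdom x); hg := cid B (ccod x); hcomm := fun v => eq_refl |}.

Definition comma_comp x y z (g : CommaHom y z) (f : CommaHom x y) : CommaHom x z.
Proof.
  refine {| hf := ccomp (hf g) (hf f); hg := ccomp (hg g) (hg f) |}.
  intros v; simpl. rewrite (hcomm g), (hcomm f). reflexivity.
Defined.

Definition CommaCat : Category.
Proof.
  refine {| Ob := CommaOb; Hom := CommaHom; idm := comma_id; comp := comma_comp |};
  intros; apply commahom_eq; apply chom_eq; reflexivity.
Defined.

Definition ProjDom : Functor CommaCat (CatOf A).
Proof.
  refine {| fobj := (cdom : Ob CommaCat -> Ob (CatOf A));
            fmap := fun x y (f : Hom x y) => hf f |};
  intros; reflexivity.
Defined.

Definition ProjCod : Functor CommaCat (CatOf B).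
Proof.
  refine {| fobj := (ccod : Ob CommaCat -> Ob (CatOf B));
            fmap := fun x y (f : Hom x y) => hg f |};
  intros; reflexivity.
Defined.
End Comma.

Record MetSpace := {
  mcar :> Type;
  md : mcar -> mcar -> R;
  md_nonneg : forall x y, 0 <= md x y;
  md_refl : forall x, md x x = 0;
  md_sep : forall x y, md x y = 0 -> x = y;
  md_sym : forall x y, md x y = md y x;
  md_tri : forall x y z, md x z <= md x y + md y z }.

Record pMetSpace := {
  pcar :> Type;
  pd : pcar -> pcar -> Rbar;
  pd_nonneg : forall x y, Rbar_le (Finite 0) (pd x y);
  pd_refl : forall x, pd x x = Finite 0;
  pd_sym : forall x y, pd x y = pd y x;
  pd_tri : forall x y z, Rbar_le (pd x z) (Rbar_plus (pd x y) (pd y z)) }.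

Record SCpx := {
  vert :> Type;
  simplex : (vert -> Prop) -> Prop;
  simplex_ne : forall s, simplex s -> exists v, s v;
  simplex_fin : forall s, simplex s -> exists l : list vert, forall v, s v <-> In v l;
  simplex_single : forall v, simplex (fun w => w = v);
  simplex_sub : forall s t, simplex s -> (exists v, t v) ->
      (forall v, t v -> s v) -> simplex t }.

Definition short_Met (X Y : MetSpace) (f : X -> Y) : Prop :=
  forall x y, md Y (f x) (f y) <= md X x y.
Definition short_pMet (X Y : pMetSpace) (f : X -> Y) : Prop :=
  forall x y, Rbar_le (pd Y (f x) (f y)) (pd X x y).
Definition simplicial (K L : SCpx) (g : K -> L) : Prop :=
  forall s, simplex K s -> simplex L (fun w => exists v, s v /\ g v = w).

Definition MetC : ConcreteCat.
Proof.
  refine {| cOb := MetSpace; carr := mcar; isHom := short_Met |}.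
  - intros X x y; apply Rle_refl.
  - intros X Y Z f g hf hg x y; eapply Rle_trans; [apply hg | apply hf].
Defined.

Definition pMetC : ConcreteCat.
Proof.
  refine {| cOb := pMetSpace; carr := pcar; isHom := short_pMet |}.
  - intros X x y; apply Rbar_le_refl.
  - intros X Y Z f g hf hg x y; eapply Rbar_le_trans; [apply hg | apply hf].
Defined.

Definition SCpxC : ConcreteCat.
Proof.
  refine {| cOb := SCpx; carr := vert; isHom := simplicial |}.
  - intros K s Hs.
    assert (E : (fun w => exists v, s v /\ v = w) = s).
    { apply FunctionalExtensionality.functional_extensionality; intros w.
      apply PropExtensionality.propositional_extensionality; split.
      - intros [v [Hv <-]]; exact Hv.
      - intros Hw; exists w; split; auto. }
    rewrite E; exact Hs.
  - intros X Y Z f g hf hg s Hs.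
    assert (E : (fun w => exists v, s v /\ g (f v) = w) =
                (fun w => exists u, (fun u => exists v, s v /\ f v = u) u /\ g u = w)).
    { apply FunctionalExtensionality.functional_extensionality; intros w.
      apply PropExtensionality.propositional_extensionality; split.
      - intros [v [Hv <-]]; exists (f v); split; eauto.
      - intros [u [[v [Hv <-]] <-]]; eauto. }
    rewrite E; apply hg, hf, Hs.
Defined.

Definition Met := CatOf MetC.
Definition pMet := CatOf pMetC.
Definition sCpx := CatOf SCpxC.
Definition SMT := CommaCat MetC SCpxC.
Definition pSMT := CommaCat pMetC SCpxC.

Definition P_Met : Functor SMT Met := ProjDom MetC SCpxC.
Definition P_pMet : Functor pSMT pMet := ProjDom pMetC SCpxC.
Definition P_sCpx : Functor pSMT sCpx := ProjCod pMetC SCpxC.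

Arguments has_left_adjoint {C D} G.
Arguments has_right_adjoint {C D} F.

(* All four adjunctions come from discrete and codiscrete structures on a set:
   - every function OUT of the discrete complex on T (only singletons are
     simplices) is simplicial, and every function INTO the full complex on T
     (every nonempty finite subset is a simplex) is simplicial;
   - every function OUT of the discrete extended pseudo-metric on T
     (distances 0 and +oo) is short, and every function INTO the indiscrete
     pseudo-metric on T (all distances 0) is short.
   Hence for the domain projection P(X, K, phi) = X of a restricted comma
   category over an arbitrary concrete category A, the functors
   X |-> (X, disc X, id) and X |-> (X, full X, id) are a left and a right
   adjoint; the counit resp. unit is built from phi resp. phi^-1.  Dually, for
   the codomain projection P(X, K, phi) = K of the comma category of pMet over
   an arbitrary concrete category B, K |-> (disc K, K, id) and
   K |-> (indisc K, K, id) are a left and a right adjoint.  Specialising A to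
   Met and pMet, and B to sCpx, gives the proposition. *)

From Stdlib Require Import Reals Lra List FunctionalExtensionality Classical ClassicalEpsilon.
From Coquelicot Require Import Rbar.

Arguments cdom {A B} _.
Arguments ccod {A B} _.
Arguments cphi {A B} _ _.
Arguments hf {A B x y} _.
Arguments hg {A B x y} _.
Arguments hcomm {A B x y} _ _.

Lemma comma_hom_ext (A B : ConcreteCat) (x y : CommaOb A B) (f g : CommaHom A B x y) :
  (forall v, proj1_sig (hf f) v = proj1_sig (hf g) v) ->
  (forall w, proj1_sig (hg f) w = proj1_sig (hg g) w) -> f = g.
Proof.
  intros Ef Eg; apply commahom_eq; apply chom_eq;
    apply functional_extensionality; assumption.
Qed.

Definition phi_inv {A B : ConcreteCat} (c : CommaOb A B) : carr B (ccod c) -> carr A (cdom c) :=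
  proj1_sig (constructive_indefinite_description _ (cphi_bij A B c)).

Lemma phi_inv_phi {A B : ConcreteCat} (c : CommaOb A B) x : phi_inv c (cphi c x) = x.
Proof. exact (proj1 (proj2_sig (constructive_indefinite_description _ (cphi_bij A B c))) x). Qed.

Lemma phi_phi_inv {A B : ConcreteCat} (c : CommaOb A B) y : cphi c (phi_inv c y) = y.
Proof. exact (proj2 (proj2_sig (constructive_indefinite_description _ (cphi_bij A B c))) y). Qed.

Lemma phi_inv_natural {A B : ConcreteCat} (c c' : CommaOb A B) (f : CommaHom A B c c') y :
  phi_inv c' (proj1_sig (hg f) y) = proj1_sig (hf f) (phi_inv c y).
Proof.
  rewrite <- (phi_inv_phi c' (proj1_sig (hf f) (phi_inv c y))), hcomm, phi_phi_inv.
  reflexivity.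
Qed.

Lemma id_bijective (T : Type) :
  exists psi : T -> T, (forall x, psi x = x) /\ (forall y, psi y = y).
Proof. exists (fun x => x); split; reflexivity. Qed.

Lemma finite_sub_of_list (T : Type) (l : list T) (P : T -> Prop) :
  (forall v, P v -> In v l) -> exists l', forall v, P v <-> In v l'.
Proof.
  revert P; induction l as [|a l IH]; intros P H.
  - exists nil; intros v; split; [exact (H v) | intros []].
  - destruct (IH (fun v => P v /\ v <> a)) as [l' Hl'].
    { intros v [Hv Hna]; destruct (H v Hv); [congruence | assumption]. }
    destruct (classic (P a)) as [Pa | nPa].
    + exists (a :: l'); intros v; split.
      * intros Hv; destruct (classic (v = a)) as [-> | Hna]; [now left |].
        right; apply Hl'; auto.
      * intros [<- | Hv]; [exact Pa | apply Hl' in Hv; tauto].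
    + exists l'; intros v; split.
      * intros Hv; apply Hl'; split; [exact Hv | intros ->; tauto].
      * intros Hv; apply Hl' in Hv; tauto.
Qed.

Definition disc_cpx (T : Type) : SCpx.
Proof.
  refine {| vert := T; simplex := fun s => exists v, forall w, s w <-> w = v |}.
  - intros s [v Hv]; exists v; apply Hv; reflexivity.
  - intros s [v Hv]; exists (v :: nil); intros w; rewrite Hv; simpl; split.
    + intros ->; now left.
    + intros [<- | []]; reflexivity.
  - intros v; exists v; intros w; tauto.
  - intros s t [v Hv] [u Hu] Hts; exists v; intros w; split.
    + intros Hw; apply Hv, Hts, Hw.
    + intros ->; assert (u = v) by (apply Hv, Hts, Hu); subst; exact Hu.
Defined.

Definition full_cpx (T : Type) : SCpx.
Proof.
  refine {| vert := T;
            simplex := fun s => (exists v, s v) /\ exists l, forall v, s v -> In v l |}.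
  - intros s [H _]; exact H.
  - intros s [_ [l Hl]]; exact (finite_sub_of_list T l s Hl).
  - intros v; split; [now exists v |]; exists (v :: nil); intros w ->; now left.
  - intros s t [_ [l Hl]] Ht Hts; split; [exact Ht |].
    exists l; intros v Hv; apply Hl, Hts, Hv.
Defined.

Lemma disc_cpx_simplicial (T : Type) (L : SCpx) (g : T -> L) :
  simplicial (disc_cpx T) L g.
Proof.
  intros s [v Hv]; apply (simplex_sub L (fun w => w = g v)).
  - apply simplex_single.
  - exists (g v), v; split; [apply Hv |]; reflexivity.
  - intros w [u [Hu <-]]; apply Hv in Hu; subst; reflexivity.
Qed.

Lemma full_cpx_simplicial (K : SCpx) (T : Type) (g : K -> T) :
  simplicial K (full_cpx T) g.
Proof.
  intros s Hs; split.
  - destruct (simplex_ne K s Hs) as [v Hv]; exists (g v), v; auto.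
  - destruct (simplex_fin K s Hs) as [l Hl]; exists (map g l).
    intros w [v [Hv <-]]; apply in_map, Hl, Hv.
Qed.

Definition disc_pmet (T : Type) : pMetSpace.
Proof.
  refine {| pcar := T;
            pd := fun x y => if excluded_middle_informative (x = y) then Finite 0 else p_infty |}.
  - intros x y; destruct excluded_middle_informative; simpl; [apply Rle_refl | exact I].
  - intros x; destruct excluded_middle_informative; [reflexivity | congruence].
  - intros x y; do 2 destruct excluded_middle_informative; congruence.
  - intros x y z; destruct (excluded_middle_informative (x = z)),
      (excluded_middle_informative (x = y)), (excluded_middle_informative (y = z));
      simpl; try exact I; try congruence; lra.
Defined.

Definition indisc_pmet (T : Type) : pMetSpace.
Proof.
  refine {| pcar := T; pd := fun _ _ => Finite 0 |}; try reflexivity.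
  - intros; apply Rle_refl.
  - intros; simpl; lra.
Defined.

Lemma disc_pmet_short (T : Type) (Y : pMetSpace) (f : T -> Y) : short_pMet (disc_pmet T) Y f.
Proof.
  intros x y; simpl; destruct excluded_middle_informative as [<- | _].
  - rewrite pd_refl; apply Rle_refl.
  - destruct (pd Y (f x) (f y)); exact I.
Qed.

Lemma indisc_pmet_short (X : pMetSpace) (T : Type) (f : X -> T) :
  short_pMet X (indisc_pmet T) f.
Proof. intros x y; apply pd_nonneg. Qed.

Section DomainProjection.
Variable A : ConcreteCat.

Notation Comma := (CommaCat A SCpxC).

Definition disc_dom_ob (X : cOb A) : CommaOb A SCpxC :=
  Build_CommaOb A SCpxC X (disc_cpx (carr A X)) (fun x => x) (id_bijective _).

Definition disc_dom_hom (X Y : cOb A) (f : CHom A X Y) :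
  CommaHom A SCpxC (disc_dom_ob X) (disc_dom_ob Y) :=
  Build_CommaHom A SCpxC (disc_dom_ob X) (disc_dom_ob Y) f (exist _ (proj1_sig f) (disc_cpx_simplicial _ _ _)) (fun _ => eq_refl).

Definition disc_dom : Functor (CatOf A) Comma.
Proof.
  refine {| fobj := (disc_dom_ob : Ob (CatOf A) -> Ob Comma);
            fmap := disc_dom_hom |};
    intros; apply comma_hom_ext; reflexivity.
Defined.

Definition disc_dom_counit (d : CommaOb A SCpxC) : CommaHom A SCpxC (disc_dom_ob (cdom d)) d :=
  Build_CommaHom A SCpxC (disc_dom_ob (cdom d)) d
    (cid A (cdom d)) (exist _ (cphi d) (disc_cpx_simplicial _ _ _))
    (fun _ => eq_refl).

Lemma disc_dom_left_adjoint : has_left_adjoint (ProjDom A SCpxC).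
Proof.
  exists disc_dom; constructor.
  refine (Build_Adjunction _ _ disc_dom (ProjDom A SCpxC)
            (fun X : cOb A => cid A X) disc_dom_counit _ _ _ _);
    intros; try (apply chom_eq; reflexivity);
    apply comma_hom_ext; intros; try reflexivity.
  (* naturality of the counit is the commutation square of g *)
  symmetry; apply hcomm.
Qed.

Definition full_dom_ob (X : cOb A) : CommaOb A SCpxC :=
  Build_CommaOb A SCpxC X (full_cpx (carr A X)) (fun x => x) (id_bijective _).

Definition full_dom_hom (X Y : cOb A) (f : CHom A X Y) :
  CommaHom A SCpxC (full_dom_ob X) (full_dom_ob Y) :=
  Build_CommaHom A SCpxC (full_dom_ob X) (full_dom_ob Y) f (exist _ (proj1_sig f) (full_cpx_simplicial _ _ _)) (fun _ => eq_refl).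

Definition full_dom : Functor (CatOf A) Comma.
Proof.
  refine {| fobj := (full_dom_ob : Ob (CatOf A) -> Ob Comma);
            fmap := full_dom_hom |};
    intros; apply comma_hom_ext; reflexivity.
Defined.

Definition full_dom_unit (c : CommaOb A SCpxC) : CommaHom A SCpxC c (full_dom_ob (cdom c)) :=
  Build_CommaHom A SCpxC c (full_dom_ob (cdom c))
    (cid A (cdom c)) (exist _ (phi_inv c) (full_cpx_simplicial _ _ _))
    (fun v => eq_sym (phi_inv_phi c v)).

Lemma full_dom_right_adjoint : has_right_adjoint (ProjDom A SCpxC).
Proof.
  exists full_dom; constructor.
  refine (Build_Adjunction _ _ (ProjDom A SCpxC) full_dom
            full_dom_unit (fun X : cOb A => cid A X) _ _ _ _);
    intros; try (apply chom_eq; reflexivity);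
    apply comma_hom_ext; intros; try reflexivity; simpl.
  -
    symmetry; exact (phi_inv_natural _ _ _ _).
  - (* second triangle identity: phi^-1 of the identity structure map *)
    apply (phi_inv_phi (full_dom_ob d)).
Qed.
End DomainProjection.

Section CodomainProjection.
Variable B : ConcreteCat.

Notation Comma := (CommaCat pMetC B).

Definition disc_cod_ob (K : cOb B) : CommaOb pMetC B :=
  Build_CommaOb pMetC B (disc_pmet (carr B K)) K (fun x => x) (id_bijective _).

Definition disc_cod_hom (K L : cOb B) (g : CHom B K L) :
  CommaHom pMetC B (disc_cod_ob K) (disc_cod_ob L) :=
  Build_CommaHom pMetC B (disc_cod_ob K) (disc_cod_ob L) (exist _ (proj1_sig g) (disc_pmet_short _ _ _)) g (fun _ => eq_refl).

Definition disc_cod : Functor (CatOf B) Comma.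
Proof.
  refine {| fobj := (disc_cod_ob : Ob (CatOf B) -> Ob Comma);
            fmap := disc_cod_hom |};
    intros; apply comma_hom_ext; reflexivity.
Defined.

Definition disc_cod_counit (d : CommaOb pMetC B) : CommaHom pMetC B (disc_cod_ob (ccod d)) d :=
  Build_CommaHom pMetC B (disc_cod_ob (ccod d)) d
    (exist _ (phi_inv d) (disc_pmet_short _ _ _)) (cid B (ccod d))
    (phi_phi_inv d).

Lemma disc_cod_left_adjoint : has_left_adjoint (ProjCod pMetC B).
Proof.
  exists disc_cod; constructor.
  refine (Build_Adjunction _ _ disc_cod (ProjCod pMetC B)
            (fun K : cOb B => cid B K) disc_cod_counit _ _ _ _);
    intros; try (apply chom_eq; reflexivity);
    apply comma_hom_ext; intros; try reflexivity; simpl.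
  -
    symmetry; exact (phi_inv_natural d d' g v).
  - (* first triangle identity: phi^-1 of the identity structure map *)
    apply (phi_inv_phi (disc_cod_ob c)).
Qed.

Definition indisc_cod_ob (K : cOb B) : CommaOb pMetC B :=
  Build_CommaOb pMetC B (indisc_pmet (carr B K)) K (fun x => x) (id_bijective _).

Definition indisc_cod_hom (K L : cOb B) (g : CHom B K L) :
  CommaHom pMetC B (indisc_cod_ob K) (indisc_cod_ob L) :=
  Build_CommaHom pMetC B (indisc_cod_ob K) (indisc_cod_ob L) (exist _ (proj1_sig g) (indisc_pmet_short _ _ _)) g (fun _ => eq_refl).

Definition indisc_cod : Functor (CatOf B) Comma.
Proof.
  refine {| fobj := (indisc_cod_ob : Ob (CatOf B) -> Ob Comma);
            fmap := indisc_cod_hom |};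
    intros; apply comma_hom_ext; reflexivity.
Defined.

Definition indisc_cod_unit (c : CommaOb pMetC B) : CommaHom pMetC B c (indisc_cod_ob (ccod c)) :=
  Build_CommaHom pMetC B c (indisc_cod_ob (ccod c))
    (exist _ (cphi c) (indisc_pmet_short _ _ _)) (cid B (ccod c))
    (fun _ => eq_refl).

Lemma indisc_cod_right_adjoint : has_right_adjoint (ProjCod pMetC B).
Proof.
  exists indisc_cod; constructor.
  refine (Build_Adjunction _ _ (ProjCod pMetC B) indisc_cod
            indisc_cod_unit (fun K : cOb B => cid B K) _ _ _ _);
    intros; try (apply chom_eq; reflexivity);
    apply comma_hom_ext; intros; try reflexivity.
  (* naturality of the unit is the commutation square of f *)
  exact (eq_sym (hcomm f v)).
Qed.
End CodomainProjection.

Theorem proposition4p9 :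
  (has_left_adjoint P_pMet /\ has_right_adjoint P_pMet) /\
  (has_left_adjoint P_sCpx /\ has_right_adjoint P_sCpx) /\
  (has_left_adjoint P_Met /\ has_right_adjoint P_Met).
Proof.
  split; [split; [apply disc_dom_left_adjoint | apply full_dom_right_adjoint] |].
  split; [split; [apply disc_cod_left_adjoint | apply indisc_cod_right_adjoint] |].
  split; [apply disc_dom_left_adjoint | apply full_dom_right_adjoint].
Qed.
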